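(* Let $\ell,m,n$ be positive integers with $\ell<n$, $m<n$, $\gcd(m,n)=1$, and let $d\in\{1,\dots,n-1\}$ be the multiplicative inverse of $m$ modulo $n$. Let $\mathcal{U}$ be obtained from $\mathcal{F}[\ell,m,n]$ by changing the symbols at all indices congruent to $0$ and at all indices congruent to $\ell d$ modulo $n$. Then the $d$-th left shift of $\mathcal{U}$ equals $\mathcal{F}[\ell,m,n]$, i.e. $\mathcal{F}[\ell,m,n]^{\overline0\,\overline{\ell d}\,(d)}=\mathcal{F}[\ell,m,n]$.
   Context: For positive integers $\ell<n$, $m<n$ with $\gcd(m,n)=1$, $\mathcal{F}[\ell,m,n]:\mathbb{Z}\to\{L,R\}$ is defined by $\mathcal{F}[\ell,m,n]_i=L$ if $im\bmod n<\ell$ and $R$ otherwise. For a sequence $\mathcal{S}$ of period $n$: $\mathcal{S}^{(j)}_i=\mathcal{S}_{i+j}$ (the $j$-th left shift), and $\mathcal{S}^{\overline j}$ differs from $\mathcal{S}$ exactly at indices $\equiv j\pmod n$; superscript operations are applied from left to right. *)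

From mathcomp Require Import all_boot all_order all_algebra.
Set Implicit Arguments. Unset Strict Implicit. Unset Printing Implicit Defensive.
Import Order.TTheory GRing.Theory Num.Theory.

Inductive LR := L | R.

Definition swapLR (x : LR) : LR := match x with L => R | R => L end.

Definition lrseq := int -> LR.

Local Open Scope ring_scope.

Definition Fseq (l m n : nat) : lrseq :=
  fun i => if ((i * m%:Z) %% n%:Z)%Z < l%:Z then L else R.

Definition lshiftLR (j : int) (S : lrseq) : lrseq := fun i => S (i + j).

Definition flipmod (n : nat) (j : int) (S : lrseq) : lrseq :=
  fun i => if ((i - j) %% n%:Z)%Z == 0 then swapLR (S i) else S i.

(* Write r for the residue of i*m modulo n, so that F_i = L iff r < l. Since
   d*m = 1 (mod n), shifting by d turns r into r + 1 (mod n), and the shifted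
   sequence agrees with F except at the two residues r = l - 1 and r = n - 1,
   where r < l and (r + 1) mod n < l disagree. These residues correspond to the
   indices i with i + d = l*d and i + d = 0 (mod n), i.e. exactly to the two
   flipped positions, which are distinct because l < n. *)
From mathcomp Require Import all_boot all_order all_algebra.
From mathcomp Require Import zify.
Import Order.TTheory GRing.Theory Num.Theory.
Local Open Scope ring_scope.

Lemma swapLR_if (b c : bool) :
  (if b then swapLR (if c then L else R) else if c then L else R)
  = if c (+) b then L else R.
Proof. by case: b; case: c. Qed.

Lemma modz_eq0 (x n : int) : ((x %% n)%Z == 0) = (n %| x)%Z.
Proof. exact/eqP/dvdz_mod0P. Qed.

Lemma modz_mulr_eq0 (x : int) [m n : int] :
  coprimez n m -> (((x * m) %% n)%Z == 0) = ((x %% n)%Z == 0).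
Proof. by move=> cop; rewrite !modz_eq0 Gauss_dvdzl. Qed.

Lemma modz_subr_eq0 (x : int) (l n : nat) : (l < n)%N ->
  (((x - l%:Z) %% n%:Z)%Z == 0) = ((x %% n%:Z)%Z == l%:Z).
Proof.
by move=> ln; rewrite modz_eq0 -eqz_mod_dvd [(l%:Z %% _)%Z]modz_small.
Qed.

Lemma modz_mulr_invD (i k : int) [d m n : int] : ((d * m) %% n = 1 %% n)%Z ->
  (((i + k * d) * m) %% n = (i * m + k) %% n)%Z.
Proof.
by move=> dm; rewrite mulrDl -mulrA -modzDmr -modzMmr dm modzMmr mulr1 modzDmr.
Qed.

Lemma modz_succ_lt (a : int) (l n : nat) : (l < n)%N ->
  let s := ((a + 1) %% n%:Z)%Z in
  (s < l%:Z) (+) (s == 0) (+) (s == l%:Z) = ((a %% n%:Z)%Z < l%:Z).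
Proof.
move=> ln s; rewrite /s -modzDml.
have r0 : 0 <= (a %% n%:Z)%Z by rewrite modz_ge0 //; lia.
have rn : (a %% n%:Z)%Z < n%:Z by rewrite ltz_pmod //; lia.
move: (a %% n%:Z)%Z r0 rn => r r0 rn.
have [rn1|rn1] := eqVneq (r + 1) n%:Z.
  rewrite rn1 modzz eqxx.
  have -> : (r < l%:Z) = false by apply/negbTE; lia.
  by case: l ln.
rewrite modz_small; last by apply/andP; split; lia.
have -> : (r + 1 == 0) = false by apply/negbTE; lia.
have [rl|rl] := eqVneq (r + 1) l%:Z.
  by rewrite rl ltxx /=; apply/esym; lia.
by rewrite !addbF; apply/idP/idP; lia.
Qed.

Theorem corollary3p2 (l m n d : nat) :
  (0 < l)%N -> (0 < m)%N -> (l < n)%N -> (m < n)%N -> coprime m n ->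
  (1 <= d <= n.-1)%N -> (m * d %% n = 1 %% n)%N ->
  forall i : int,
    lshiftLR (Posz d) (flipmod n (Posz (l * d)) (flipmod n 0%R (Fseq l m n))) i
    = Fseq l m n i.
Proof.
move=> _ _ ln _ cop _ md i.
have copz : coprimez n m by rewrite coprimezE coprime_sym.
have dm : ((d%:Z * m%:Z) %% n%:Z = 1 %% n%:Z)%Z.
  by rewrite -PoszM !modz_nat mulnC md.
rewrite /lshiftLR /flipmod /Fseq subr0.
have -> : i + d%:Z - (l * d)%N%:Z = i + (1 - l%:Z) * d%:Z.
  by rewrite PoszM mulrBl mul1r addrA.
have -> : i + d%:Z = i + 1 * d%:Z by rewrite mul1r.
rewrite !swapLR_if -(modz_mulr_eq0 (i + 1 * d%:Z) copz).
rewrite -(modz_mulr_eq0 (i + (1 - l%:Z) * d%:Z) copz).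
rewrite !(modz_mulr_invD _ _ dm) addrA modz_subr_eq0 //.
by congr (if _ then _ else _); exact: modz_succ_lt.
Qed.
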